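(* Let $\Sigma=\{0,1\}$ and let $w\in\Sigma^+\setminus\Sigma^*11\Sigma^*$ with $|w|=k\ge1$. Then (1) $w\in0\Sigma^*$ if and only if $0\le\mathrm{val}_{\mathcal{F}c}(w)<F_{k-1}$; (2) $w\in1\Sigma^*$ if and only if $-F_{k-2}\le\mathrm{val}_{\mathcal{F}c}(w)<0$.
   Context: Fibonacci numbers: $F_0=1$, $F_1=2$, $F_n=F_{n-1}+F_{n-2}$ for $n\ge2$, extended to negative indices by the same recurrence ($F_{-1}=1$, $F_{-2}=0$). For a nonempty binary word $w=w_{k-1}\cdots w_0$ (digits indexed from the right), $\mathrm{val}_{\mathcal{F}c}(w)=\sum_{i=0}^{k-1}w_iF_i-w_{k-1}F_k$. *)

From mathcomp Require Import all_boot all_order all_algebra.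
Set Implicit Arguments. Unset Strict Implicit. Unset Printing Implicit Defensive.
Import GRing.Theory Num.Theory.
Local Open Scope ring_scope.

Fixpoint fib (n : nat) : nat :=
  match n with
  | 0 => 0
  | 1 => 1
  | (m.+1 as p).+1 => fib p + fib m
  end%N.

(* Paper's Fibonacci numbers on all integer indices:
   F_n = fib (n+2) for n >= -2 (so F_0 = 1, F_1 = 2, F_{-1} = 1, F_{-2} = 0),
   and F_{-2-j} = (-1)^(j+1) fib j for j >= 0, which is the unique extension
   satisfying F_n = F_{n-1} + F_{n-2} for all n. *)
Definition F (n : int) : int :=
  match n with
  | Posz m => (fib m.+2)%:Z
  | Negz m => (* n = -(m+1) *)
      if (m <= 1)%N then (fib (1 - m)%N)%:Z
      else (-1) ^+ (m - 1)%N.+1 * (fib (m - 1)%N)%:Z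
  end.

(* A binary word w = w_{k-1} ... w_0 is represented by the list
   [:: w_{k-1}; ...; w_0] (leftmost = most significant digit first).
   digit w i = w_i, indexed from the right. *)
Definition digit (w : seq bool) (i : nat) : int :=
  (nth false w (size w - i.+1)%N : nat)%:Z.

Definition valFc (w : seq bool) : int :=
  \sum_(i < size w) digit w i * F i%:Z
  - digit w (size w).-1 * F (size w)%:Z.

Definition has11 (w : seq bool) : bool :=
  has (fun i => nth false w i && nth false w i.+1) (iota 0 (size w)).

From mathcomp Require Import all_boot all_order all_algebra.
From mathcomp Require Import zify.
Import GRing.Theory Num.Theory.
Local Open Scope ring_scope.

(* Writing [w = b :: v] with [|v| = n], the sum in [valFc w] splits off the
   leading term [b F_n], so [valFc w = valF v - b F_(n-1)], where [valF v] is
   the ordinary Zeckendorf value of [v].  The classical bound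
   [valF v < F_(|v| - 1 + head v)] for words avoiding [11] then places
   [valFc w] in [[0, F_(n-1))] if [b = 0] and, since [b = 1] forces [v] to
   start with [0], in [[-F_(n-2), 0)] if [b = 1]. *)

Lemma fibSS n : fib n.+2 = (fib n.+1 + fib n)%N.
Proof. by []. Qed.

Lemma leq_fib_succ n : (fib n <= fib n.+1)%N.
Proof. by case: n => [|n] //; rewrite fibSS leq_addr. Qed.

Fixpoint valF (v : seq bool) : nat :=
  if v is b :: v' then (b * fib (size v').+2 + valF v')%N else 0%N.

Lemma valF_cons b v : valF (b :: v) = (b * fib (size v).+2 + valF v)%N.
Proof. by []. Qed.

Lemma digit_cons b v i : (i < size v)%N -> digit (b :: v) i = digit v i.
Proof. by move=> lt_iv; rewrite /digit /= subSn. Qed.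

Lemma digit_cons_size b v : digit (b :: v) (size v) = b.
Proof. by rewrite /digit /= subnn. Qed.

Lemma sum_digit_F (v : seq bool) :
  \sum_(i < size v) digit v i * F i%:Z = (valF v)%:Z.
Proof.
elim: v => [|b v IHv]; first by rewrite big_ord0.
rewrite /= big_ord_recr /= digit_cons_size.
rewrite (eq_bigr (fun i : 'I_(size v) => digit v i * F i%:Z)); last first.
  by move=> i _; rewrite digit_cons.
by rewrite IHv PoszD addrC.
Qed.

Lemma valFc_cons b v :
  valFc (b :: v) = (valF v)%:Z - (b * fib (size v).+1)%N%:Z.
Proof.
rewrite /valFc sum_digit_F [size _]/= digit_cons_size.
change (F (size v).+1%:Z) with (fib (size v).+3)%:Z.
rewrite fibSS /=; lia.
Qed.

Lemma has11_cons b v : has11 (b :: v) = (b && head false v) || has11 v.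
Proof. by rewrite /has11 /= (iotaDl 1 0) has_map; case: v. Qed.

Lemma valF_lt v : ~~ has11 v -> (valF v < fib (size v + head false v).+1)%N.
Proof.
elim: v => [|b v IHv] //; rewrite has11_cons negb_or => /andP[no11_bv no11_v].
have lt_v := IHv no11_v.
rewrite valF_cons; change (size (b :: v)) with (size v).+1.
change (head false (b :: v)) with b.
case: b no11_bv => [head_v | _].
- rewrite andTb in head_v; rewrite (negbTE head_v) addn0 in lt_v.
  by rewrite mul1n addn1 (fibSS (size v).+1) ltn_add2l.
- have := leq_fib_succ (size v).+1.
  by case: (head false v) lt_v; rewrite mul0n ?addn0 ?addn1; lia.
Qed.

Lemma F_natS_sub1 n : F (n.+1%:Z - 1) = (fib n.+2)%:Z.
Proof. by have -> : n.+1%:Z - 1 = n%:Z by lia. Qed.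

Lemma F_natS_sub2 n : F (n.+1%:Z - 2) = (fib n.+1)%:Z.
Proof. by case: n => [|n] //; have -> : n.+2%:Z - 2 = n%:Z by lia. Qed.

Theorem lemma6p4 (w : seq bool) :
  (1 <= size w)%N -> ~~ has11 w ->
  let k : int := (size w)%:Z in
  ((head true w == false) = (0 <= valFc w < F (k - 1)))
  /\ ((head false w == true) = (- F (k - 2) <= valFc w < 0)).
Proof.
case: w => [|b v] // _; rewrite has11_cons negb_or => /andP[no11_bv no11_v] k.
change k with (size v).+1%:Z; clear k.
change (head true (b :: v)) with b; change (head false (b :: v)) with b.
rewrite F_natS_sub1 F_natS_sub2 valFc_cons.
have := valF_lt v no11_v.
case: b no11_bv => [head_v | _].
- rewrite andTb in head_v; rewrite (negbTE head_v) addn0 mul1n eqxx.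
  (* Abstracting the Fibonacci values keeps [lia] from unfolding [fib]. *)
  move: (fib (size v).+2) (fib (size v).+1) => c d lt_v.
  split; last by apply/esym/andP; split; lia.
  by apply/esym/negbTE/negP => /andP; lia.
- have le_fib : (fib (size v + head false v).+1 <= fib (size v).+2)%N.
    by case: (head false v); rewrite ?addn0 ?addn1 ?leq_fib_succ.
  rewrite mul0n subr0 eqxx.
  move: (fib _) (fib (size v).+2) (fib (size v).+1) le_fib => a c d le_ac lt_v.
  split; first by apply/esym/andP; split; lia.
  by apply/esym/negbTE/negP => /andP; lia.
Qed.
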